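(* Let $p_0^{(k)},\dots,p_n^{(k)}\in\mathcal{P}$ be the preference densities of the $n+1$ agents at iteration $k$. Construct the densities at iteration $k+1$ sequentially for $i=0,1,\dots,n$, in that order, by $$p_i^{(k+1)}(f) = \frac{p_i^{(k)}(f)\exp\big(-\bar{\gamma}_i^{(k)}(f)\big)}{\int_{\mathcal{F}} p_i^{(k)}(g)\exp\big(-\bar{\gamma}_i^{(k)}(g)\big)\, dg},$$ where $$\bar{\gamma}_i^{(k)}(f) = \sum_{j=0}^{i-1} \int_{\mathcal{F}} \psi(f, g)\, p_j^{(k+1)}(g)\, dg + \sum_{j=i+1}^{n} \int_{\mathcal{F}} \psi(f, g)\, p_j^{(k)}(g)\, dg .$$ If $p_i^{(k+1)} \neq p_i^{(k)}$ for some $i\in\{0,\dots,n\}$, then there exists $\xi>0$ such that $$J_c\big(p_0^{(k+1)},\dots,p_n^{(k+1)}\big) \le J_c\big(p_0^{(k)},\dots,p_n^{(k)}\big) - \xi .$$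
   Context: Trajectory space: $\mathcal{F} \subseteq \mathbb{R}^{d\times T}$, where $d$ is the state dimension and $T$ is the number of time points. Distribution space: $\mathcal{P}$ is the set of probability density functions $p:\mathcal{F}\to[0,\infty)$ with $\int_{\mathcal{F}} p(f)\,df=1$. There are $n+1$ agents, indexed $0,1,\dots,n$ (index $0$ is the robot). The collision penalty function $\psi:\mathcal{F}\times\mathcal{F}\to[0,\infty)$ is symmetric, i.e. $\psi(f,g)=\psi(g,f)$. The expected collision penalty of two densities is $$c(p,q)=\int_{\mathcal{F}}\int_{\mathcal{F}}\psi(f,g)\,p(f)\,q(g)\,df\,dg,$$ and the joint expected collision penalty is $$J_c(p_0,\dots,p_n)=\sum_{i=0}^{n}\sum_{j=i+1}^{n} c(p_i,p_j).$$ *)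

From HB Require Import structures.
From mathcomp Require Import all_boot all_order all_algebra.
From mathcomp Require Import all_classical all_reals all_analysis.
Set Implicit Arguments. Unset Strict Implicit. Unset Printing Implicit Defensive.
Import Order.TTheory GRing.Theory Num.Theory.
Local Open Scope classical_set_scope.
Local Open Scope ring_scope.
Local Open Scope ereal_scope.

Section Defs.
Context {dT : measure_display} {T : measurableType dT} {R : realType}.
Variable mu : {measure set T -> \bar R}.
Variable F : set T.
Variable psi : T -> T -> R.

Definition is_density (p : T -> R) : Prop :=
  [/\ measurable_fun F p, (forall f, F f -> (0 <= p f)%R)
    & \int[mu]_(f in F) (p f)%:E = 1].

Definition coll (p q : T -> R) : \bar R :=
  \int[mu]_(f in F) \int[mu]_(g in F) (psi f g * p f * q g)%:E.

Definition Jc (n : nat) (p : 'I_n.+1 -> T -> R) : \bar R :=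
  \sum_(i < n.+1) \sum_(j < n.+1 | (i < j)%N) coll (p i) (p j).

Definition gammabar (n : nat) (pk pk1 : 'I_n.+1 -> T -> R) (i : 'I_n.+1)
    (f : T) : \bar R :=
  \sum_(j < n.+1 | (j < i)%N) \int[mu]_(g in F) (psi f g * pk1 j g)%:E
  + \sum_(j < n.+1 | (i < j)%N) \int[mu]_(g in F) (psi f g * pk j g)%:E.

Definition update_rule (n : nat) (pk pk1 : 'I_n.+1 -> T -> R) : Prop :=
  forall (i : 'I_n.+1) (f : T), F f ->
    pk1 i f = (pk i f * expR (- fine (gammabar pk pk1 i f))
       / fine (\int[mu]_(g in F) (pk i g * expR (- fine (gammabar pk pk1 i g)))%:E))%R.

End Defs.

(* Updating agent i alone changes J_c only through the terms c(p_i, p_j),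
   j <> i, whose sum is the integral of p_i against gammabar_i computed from
   the current profile of the sweep.  The update p_i |-> p_i e^(-gammabar_i) / Z
   is a Gibbs tilt, and a tilt q of a density p by a potential gam >= 0
   satisfies  int q gam <= int p gam , strictly unless q = p a.e., because
   (p - q)(gam + ln Z) >= 0 pointwise.  Hence J_c does not increase along the
   sweep from p^(k) to p^(k+1) and decreases strictly at an agent that moves;
   when J_c(p^(k)) is finite the strict inequality between the two values
   provides xi, and otherwise any xi works. *)

From Pilot Require Import Defs.
From HB Require Import structures.
From mathcomp Require Import all_boot all_order all_algebra.
From mathcomp Require Import all_classical all_reals all_analysis.
From mathcomp Require Import measurable_realfun lebesgue_integral_fubini.
From mathcomp Require Import ring lra.
Set Implicit Arguments.
Unset Strict Implicit.
Unset Printing Implicit Defensive.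
Import Order.TTheory GRing.Theory Num.Theory.
Local Open Scope classical_set_scope.
Local Open Scope ring_scope.

Section fubini_tonelli_in.
Local Open Scope ereal_scope.
Context d1 d2 (T1 : measurableType d1) (T2 : measurableType d2) (R : realType).
Variables (m1 : {sigma_finite_measure set T1 -> \bar R})
  (m2 : {sigma_finite_measure set T2 -> \bar R}).
Variables (A : set T1) (B : set T2) (h : T1 -> T2 -> \bar R).
Hypotheses (mA : measurable A) (mB : measurable B).
Hypothesis mh : measurable_fun (A `*` B) (fun z => h z.1 z.2).
Hypothesis h0 : forall x y, A x -> B y -> 0 <= h x y.

Let H := (fun z => h z.1 z.2) \_ (A `*` B).

Let mH : measurable_fun setT H.
Proof. exact: (measurable_restrictT _ (measurableX mA mB)).1 mh. Qed.

Let H0 z : 0 <= H z.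
Proof. by rewrite /H patchE; case: ifPn => // /set_mem[/= ? ?]; exact: h0. Qed.

Let HE x y : H (x, y) = if (x \in A) && (y \in B) then h x y else 0.
Proof. by rewrite /H patchE in_setX. Qed.

Let integral_inB x : A x -> \int[m2]_(y in B) h x y = \int[m2]_y H (x, y).
Proof.
move=> /mem_set Ax; rewrite integral_mkcond; apply: eq_integral => y _.
by rewrite HE Ax patchE.
Qed.

Let integral_inA y : B y -> \int[m1]_(x in A) h x y = \int[m1]_x H (x, y).
Proof.
move=> /mem_set By; rewrite integral_mkcond; apply: eq_integral => x _.
by rewrite HE By andbT patchE.
Qed.

Lemma measurable_fun_integral_in :
  measurable_fun A (fun x => \int[m2]_(y in B) h x y).
Proof.
apply: (eq_measurable_fun (fubini_F m2 H)) => [x /set_mem Ax|].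
  by rewrite integral_inB.
exact: measurable_funS (measurable_fun_fubini_tonelli_F _ mH H0).
Qed.

Lemma fubini_tonelli_in :
  \int[m1]_(x in A) \int[m2]_(y in B) h x y =
  \int[m2]_(y in B) \int[m1]_(x in A) h x y.
Proof.
transitivity (\int[m1]_x \int[m2]_y H (x, y)).
  rewrite integral_mkcond; apply: eq_integral => x _; rewrite patchE.
  case: ifPn => [/set_mem /integral_inB //|Ax].
  by apply/esym/integral0_eq => y _; rewrite HE (negbTE Ax).
rewrite (fubini_tonelli _ mH H0) [RHS]integral_mkcond.
apply: eq_integral => y _; rewrite patchE.
case: ifPn => [/set_mem /integral_inA //|By].
by apply: integral0_eq => x _; rewrite HE (negbTE By) andbF.
Qed.

End fubini_tonelli_in.

Section measurable_setX.
Context d1 d2 d3 (T1 : measurableType d1) (T2 : measurableType d2)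
  (T3 : measurableType d3).
Variables (A : set T1) (B : set T2).
Hypotheses (mA : measurable A) (mB : measurable B).

Lemma measurable_fun_setX_fst (x : T1 -> T3) :
  measurable_fun A x -> measurable_fun (A `*` B) (fun z => x z.1).
Proof.
move=> mx; apply: (measurable_comp mA) => //; first by move=> _ [z [Az _] <-].
exact: measurable_funTS measurable_fst.
Qed.

Lemma measurable_fun_setX_snd (y : T2 -> T3) :
  measurable_fun B y -> measurable_fun (A `*` B) (fun z => y z.2).
Proof.
move=> my; apply: (measurable_comp mB) => //; first by move=> _ [z [_ Bz] <-].
exact: measurable_funTS measurable_snd.
Qed.

Lemma measurable_fun_setX_pair1 (h : T1 * T2 -> T3) x : A x ->
  measurable_fun (A `*` B) h -> measurable_fun B (fun y => h (x, y)).
Proof.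
move=> Ax mh; apply: (measurable_comp (measurableX mA mB)) => //.
  by move=> _ [y By <-].
exact: measurable_funTS (pair1_measurable x).
Qed.

End measurable_setX.

Lemma sum_pairs_split (V : nmodType) (m : nat) (C : 'I_m -> 'I_m -> V)
    (k : 'I_m) : (forall a b, C a b = C b a) ->
  \sum_(a < m) \sum_(b < m | (a < b)%N) C a b =
  \sum_(a < m) \sum_(b < m | [&& (a < b)%N, a != k & b != k]) C a b
  + \sum_(j < m | j != k) C k j.
Proof.
move=> CC; have split_k (a : 'I_m) : \sum_(b < m | (a < b)%N) C a b =
    \sum_(b < m | [&& (a < b)%N, a != k & b != k]) C a b
    + \sum_(b < m | (a < b)%N && ((a == k) || (b == k))) C a b.
  rewrite (bigID (fun b => (a != k) && (b != k))); congr (_ + _).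
  by apply: eq_bigl => b; rewrite negb_and !negbK.
rewrite (eq_bigr _ (fun a _ => split_k a)) big_split /=; congr (_ + _).
have to_k (a : 'I_m) : a != k ->
    \sum_(b < m | (a < b)%N && ((a == k) || (b == k))) C a b =
    if (a < k)%N then C k a else 0.
  move=> /negbTE ak; rewrite ak; case: ifPn => [ak' | ka].
    rewrite [RHS]CC (big_pred1 k) // => b /=.
    by case: (b =P k) => [->|_]; rewrite ?andbT ?andbF.
  rewrite big_pred0 // => b /=.
  by case: (b =P k) => [->|_]; rewrite ?andbT ?andbF ?(negbTE ka).
rewrite (bigD1 k) //= (eq_bigr _ to_k) -big_mkcondr /=.
rewrite [RHS](bigID (fun j : 'I_m => (k < j)%N)) /=.
by congr (_ + _); apply: eq_bigl => j; rewrite ?eqxx -val_eqE /=; case: ltngtP.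
Qed.

Lemma ereal_gap (R : realType) (x y : \bar R) : (y < +oo -> x < y)%E ->
  exists xi : R, 0 < xi /\ (x <= y - xi%:E)%E.
Proof.
case: y => [y| |] xy; last by have := xy (ltNye _); rewrite ltNge leNye.
- case: x {xy}(xy (ltry y)) => [x| |] xy; last by exists 1; rewrite leNye.
    by exists (y - x); rewrite subr_gt0 -lte_fin xy -EFinB lee_fin; lra.
  by rewrite ltNge leey in xy.
- by exists 1; rewrite leey.
Qed.

Lemma expRN_gap_ge0 (R : realType) (P U : R) :
  0 <= P -> 0 <= (P - P * expR (- U)) * U.
Proof.
move=> P0; rewrite -[X in X - _]mulr1 -mulrBr -mulrA mulr_ge0 //.
have [U0|U0] := leP 0 U.
  by rewrite mulr_ge0 // subr_ge0 expR_le1 oppr_le0.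
apply: mulr_le0; last exact: ltW.
by rewrite subr_le0 -[leLHS]expR0 ler_expR oppr_ge0 ltW.
Qed.

Lemma expRN_gap_eq0 (R : realType) (P U : R) :
  (P - P * expR (- U)) * U = 0 -> P * expR (- U) = P.
Proof.
move=> /eqP; rewrite mulf_eq0 => /orP[|/eqP ->].
  by rewrite subr_eq0 => /eqP.
by rewrite oppr0 expR0 mulr1.
Qed.

Section ae_eq_integral_le.
Local Open Scope ereal_scope.
Context d (T : measurableType d) (R : realType).
Variables (mu : {measure set T -> \bar R}) (D : set T) (f g : T -> R).
Hypotheses (mD : measurable D) (mf : measurable_fun D f)
  (mg : measurable_fun D g).
Hypotheses (f0 : forall x, D x -> (0 <= f x)%R)
  (fg : forall x, D x -> (f x <= g x)%R).

Let integrable_ge0 (h : T -> R) : measurable_fun D h ->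
  (forall x, D x -> 0 <= h x)%R -> \int[mu]_(x in D) (h x)%:E < +oo ->
  mu.-integrable D (EFin \o h).
Proof.
move=> mh h0 hlty; apply/integrableP; split; first exact/measurable_EFinP.
rewrite (eq_integral (fun x => (h x)%:E)) // => x /set_mem Dx.
by rewrite /= ger0_norm ?h0.
Qed.

Lemma ae_eq_integral_le : \int[mu]_(x in D) (g x)%:E < +oo ->
  \int[mu]_(x in D) (f x)%:E = \int[mu]_(x in D) (g x)%:E ->
  ae_eq mu D (EFin \o f) (EFin \o g).
Proof.
move=> glty fgE.
have g0 x : D x -> (0 <= g x)%R by move=> Dx; exact: le_trans (f0 Dx) (fg Dx).
have gfin : \int[mu]_(x in D) (g x)%:E \is a fin_num.
  by rewrite ge0_fin_numE // integral_ge0 // => x Dx; rewrite lee_fin g0.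
have mgf : measurable_fun D (fun x => (g x - f x)%:E).
  by apply/measurable_EFinP; exact: measurable_funB.
have : \int[mu]_(x in D) `|(g x - f x)%:E| = 0.
  rewrite (eq_integral (fun x => (g x)%:E - (f x)%:E)); last first.
    by move=> x /set_mem Dx; rewrite gee0_abs ?lee_fin ?subr_ge0 ?fg.
  by rewrite integralB_EFin ?fgE ?subee // integrable_ge0 // fgE.
move=> /(ae_eq_integral_abs _ mD mgf); apply: filterS => x gf Dx.
by have /eqP := gf Dx; rewrite /= eqe subr_eq0 => /eqP ->.
Qed.

End ae_eq_integral_le.

Section gibbs.
Local Open Scope ereal_scope.
Context d (T : measurableType d) (R : realType).
Variables (mu : {measure set T -> \bar R}) (F : set T).
Hypothesis mF : measurable F.

Lemma integral_addZ_density (h y : T -> R) (c : R) :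
  measurable_fun F h -> (forall x, F x -> 0 <= h x)%R ->
  is_density mu F y -> (0 <= c)%R ->
  \int[mu]_(x in F) (h x + c * y x)%:E = \int[mu]_(x in F) (h x)%:E + c%:E.
Proof.
move=> mh h0 [my y0 y1] c0.
have y0E x : F x -> 0 <= (y x)%:E by move=> Fx; rewrite lee_fin y0.
have myE : measurable_fun F (fun x => (y x)%:E) by exact/measurable_EFinP.
rewrite (eq_integral (fun x => (h x)%:E + c%:E * (y x)%:E)) // ge0_integralD //.
- by rewrite ge0_integralZl_EFin ?y1 ?mule1.
- exact/measurable_EFinP.
- by move=> x Fx; rewrite -EFinM lee_fin mulr_ge0 ?y0.
- exact: measurable_funeM.
Qed.

Variables (p gam q : T -> R).
Hypothesis dp : is_density mu F p.
Hypotheses (mgam : measurable_fun F gam)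
  (gam0 : forall f, F f -> (0 <= gam f)%R).

Let Z := \int[mu]_(g in F) (p g * expR (- gam g))%:E.
Hypothesis qE : forall f, F f -> q f = (p f * expR (- gam f) / fine Z)%R.

Let p0 f : F f -> (0 <= p f)%R. Proof. by case: dp => _ + _; apply. Qed.

Let pe0 f : F f -> (0 <= p f * expR (- gam f))%R.
Proof. by move=> Ff; rewrite mulr_ge0 ?p0 ?expR_ge0. Qed.

Let mpe : measurable_fun F (fun g => p g * expR (- gam g))%R.
Proof.
case: dp => mp _ _; apply: measurable_funM => //.
exact/measurableT_comp/measurable_funN.
Qed.

Let Z_le1 : Z <= 1.
Proof.
case: dp => mp _ <-.
apply: ge0_le_integral => //; first exact/measurable_EFinP.
  exact/measurable_EFinP.
by move=> f Ff; rewrite lee_fin ler_piMr ?p0 // expR_le1 oppr_le0 gam0.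
Qed.

Let Z_neq0 : Z != 0.
Proof.
apply/eqP => Z0; case: dp => mp _.
have mpE : measurable_fun F (EFin \o p) by exact/measurable_EFinP.
suff p_ae0 : ae_eq mu F (EFin \o p) (cst 0).
  rewrite (ae_eq_integral _ _ mF mpE _ p_ae0) ?integral0 //.
  by move/eqP; rewrite eq_sym onee_eq0.
have : ae_eq mu F (fun g => (p g * expR (- gam g))%:E) (cst 0).
  apply/ae_eq_integral_abs => //; first exact/measurable_EFinP.
  rewrite -Z0; apply: eq_integral => f /set_mem Ff.
  by rewrite gee0_abs // lee_fin pe0.
apply: filterS => f pef Ff; move/eqP: (pef Ff).
by rewrite /= eqe mulf_eq0 (gt_eqF (expR_gt0 _)) orbF => /eqP ->.
Qed.

Let z := fine Z.

Let ZE : Z = z%:E.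
Proof.
rewrite fineK // ge0_fin_numE ?(le_lt_trans Z_le1) ?ltry //.
by apply: integral_ge0 => f Ff; rewrite lee_fin pe0.
Qed.

Let z_gt0 : (0 < z)%R.
Proof.
rewrite -lte_fin -ZE lt0e Z_neq0 /=.
by apply: integral_ge0 => f Ff; rewrite lee_fin pe0.
Qed.

Let a := (- ln z)%R.

Let a_ge0 : (0 <= a)%R.
Proof. by rewrite oppr_ge0 ln_le0 // -lee_fin -ZE. Qed.

Let qE_shift f : F f -> q f = (p f * expR (- (gam f - a)))%R.
Proof.
move=> Ff; rewrite qE // opprB addrC expRD /a (expRN (ln z)) lnK ?posrE //.
by rewrite mulrA.
Qed.

Let q0 f : F f -> (0 <= q f)%R.
Proof. by move=> Ff; rewrite qE_shift ?mulr_ge0 ?p0 ?expR_ge0. Qed.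

Let mq : measurable_fun F q.
Proof.
apply: (eq_measurable_fun (fun f => p f * expR (- gam f) * z^-1)%R).
  by move=> f /set_mem Ff; rewrite qE.
exact: measurable_funM.
Qed.

Lemma is_density_gibbs : is_density mu F q.
Proof.
split => //.
rewrite (eq_integral (fun f => z^-1%:E * (p f * expR (- gam f))%:E)).
  rewrite ge0_integralZl_EFin ?invr_ge0 ?ltW //; last exact/measurable_EFinP.
  by rewrite -/Z ZE -EFinM mulVf ?gt_eqF.
by move=> f /set_mem Ff; rewrite qE // -EFinM mulrC.
Qed.

Let dq : is_density mu F q := is_density_gibbs.

(* Pointwise, [upper - lower = (p - q) (gam - a) >= 0]; the shift [a] is added
   on both sides so that no possibly infinite integral is ever subtracted. *)
Let lower f := (q f * gam f + a * p f)%R.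
Let upper f := (p f * gam f + a * q f)%R.

Let upperBlower f : F f ->
  (upper f - lower f = (p f - p f * expR (- (gam f - a))) * (gam f - a))%R.
Proof. by move=> Ff; rewrite /upper /lower qE_shift //; ring. Qed.

Let lower_le_upper f : F f -> (lower f <= upper f)%R.
Proof. by move=> Ff; rewrite -subr_ge0 upperBlower // expRN_gap_ge0 ?p0. Qed.

Let lower_ge0 f : F f -> (0 <= lower f)%R.
Proof. by move=> Ff; rewrite addr_ge0 ?mulr_ge0 ?q0 ?gam0 ?p0. Qed.

Let mpgam : measurable_fun F (fun f => p f * gam f)%R.
Proof. by case: dp => mp _ _; exact: measurable_funM. Qed.

Let mqgam : measurable_fun F (fun f => q f * gam f)%R.
Proof. exact: measurable_funM. Qed.

Let mlower : measurable_fun F lower.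
Proof.
by case: dp => mp _ _; apply: measurable_funD => //; exact: measurable_funM.
Qed.

Let mupper : measurable_fun F upper.
Proof. by apply: measurable_funD => //; exact: measurable_funM. Qed.

Let integral_lower : \int[mu]_(f in F) (lower f)%:E =
  \int[mu]_(f in F) (q f * gam f)%:E + a%:E.
Proof.
by rewrite integral_addZ_density // => f Ff; rewrite mulr_ge0 ?q0 ?gam0.
Qed.

Let integral_upper : \int[mu]_(f in F) (upper f)%:E =
  \int[mu]_(f in F) (p f * gam f)%:E + a%:E.
Proof.
by rewrite integral_addZ_density // => f Ff; rewrite mulr_ge0 ?p0 ?gam0.
Qed.

Lemma gibbs_le :
  \int[mu]_(f in F) (q f * gam f)%:E <= \int[mu]_(f in F) (p f * gam f)%:E.
Proof.
rewrite -(@leeD2rE _ a%:E) // -integral_lower -integral_upper.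
by apply: ge0_le_integral => //; exact/measurable_EFinP.
Qed.

Lemma gibbs_lt : \int[mu]_(f in F) (p f * gam f)%:E < +oo ->
  ~ {ae mu, forall f, F f -> q f = p f} ->
  \int[mu]_(f in F) (q f * gam f)%:E < \int[mu]_(f in F) (p f * gam f)%:E.
Proof.
move=> pgam_lty not_ae; rewrite lt_neqAle gibbs_le andbT.
apply: contra_notN not_ae => /eqP qp.
have upper_lty : \int[mu]_(f in F) (upper f)%:E < +oo.
  by rewrite integral_upper lte_add_pinfty ?ltry.
have := ae_eq_integral_le (mu := mu) mF mlower mupper lower_ge0
  lower_le_upper upper_lty.
rewrite integral_lower integral_upper qp => /(_ erefl).
apply: filterS => f lu Ff; rewrite qE_shift //; apply: expRN_gap_eq0.
by rewrite -upperBlower // (EFin_inj (lu Ff)) subrr.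
Qed.

End gibbs.

Section collision.
Local Open Scope ereal_scope.
Context d (T : measurableType d) (R : realType).
Variables (mu : {sigma_finite_measure set T -> \bar R}) (F : set T)
  (psi : T -> T -> R).
Hypotheses (mF : measurable F)
  (mpsi : measurable_fun (F `*` F) (fun z => psi z.1 z.2)).
Hypotheses (psi0 : forall f g, F f -> F g -> (0 <= psi f g)%R)
  (psiC : forall f g, F f -> F g -> psi f g = psi g f).

Local Notation coll := (Defs.coll mu F psi).
Local Notation Jc := (Defs.Jc mu F psi).

Definition potential (q : T -> R) (f : T) : \bar R :=
  \int[mu]_(g in F) (psi f g * q g)%:E.

Let measurable_coll_integrand (p q : T -> R) :
  measurable_fun F p -> measurable_fun F q ->
  measurable_fun (F `*` F) (fun z => (psi z.1 z.2 * p z.1 * q z.2)%:E).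
Proof.
move=> mp mq; apply/measurable_EFinP; apply: measurable_funM.
  by apply: measurable_funM => //; exact: measurable_fun_setX_fst.
exact: measurable_fun_setX_snd.
Qed.

Let measurable_potential_integrand (q : T -> R) : measurable_fun F q ->
  measurable_fun (F `*` F) (fun z => (psi z.1 z.2 * q z.2)%:E).
Proof.
move=> mq; apply/measurable_EFinP; apply: measurable_funM => //.
exact: measurable_fun_setX_snd.
Qed.

Let potential_integrand_ge0 (q : T -> R) f g :
  is_density mu F q -> F f -> F g -> 0 <= (psi f g * q g)%:E.
Proof. by case=> _ q0 _ Ff Fg; rewrite lee_fin mulr_ge0 ?psi0 ?q0. Qed.

Lemma measurable_potential q :
  is_density mu F q -> measurable_fun F (potential q).
Proof.
move=> dq; have [mq _ _] := dq.
apply: (measurable_fun_integral_in _ mF mF (measurable_potential_integrand mq)).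
by move=> f g; exact: potential_integrand_ge0.
Qed.

Lemma potential_ge0 q f : is_density mu F q -> F f -> 0 <= potential q f.
Proof.
move=> dq Ff; apply: integral_ge0 => g Fg.
exact: potential_integrand_ge0 dq Ff Fg.
Qed.

Lemma coll_potentialE p q : is_density mu F p -> is_density mu F q ->
  coll p q = \int[mu]_(f in F) ((p f)%:E * potential q f).
Proof.
move=> [mp p0 _] dq; have [mq _ _] := dq.
have mpsiq := measurable_potential_integrand mq.
apply: eq_integral => f /set_mem Ff; rewrite -ge0_integralZl_EFin ?p0 //.
- by apply: eq_integral => g _; rewrite -EFinM mulrCA mulrA.
- by move=> g Fg; exact: potential_integrand_ge0 dq Ff Fg.
- exact: (measurable_fun_setX_pair1 mF mF Ff mpsiq).
Qed.

Lemma collC p q : is_density mu F p -> is_density mu F q -> coll p q = coll q p.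
Proof.
move=> [mp p0 _] [mq q0 _]; rewrite /Defs.coll fubini_tonelli_in //.
- apply: eq_integral => f /set_mem Ff; apply: eq_integral => g /set_mem Fg.
  by rewrite psiC // mulrAC.
- exact: measurable_coll_integrand.
- by move=> f g Ff Fg; rewrite lee_fin !mulr_ge0 ?psi0 ?p0 ?q0.
Qed.

Lemma coll_ge0 p q : is_density mu F p -> is_density mu F q -> 0 <= coll p q.
Proof.
move=> [_ p0 _] [_ q0 _].
apply: integral_ge0 => f Ff; apply: integral_ge0 => g Fg.
by rewrite lee_fin !mulr_ge0 ?psi0 ?p0 ?q0.
Qed.

Lemma sum_coll_potential (I : Type) (s : seq I) (p : T -> R)
    (Q : I -> T -> R) :
  is_density mu F p -> (forall j, is_density mu F (Q j)) ->
  \sum_(j <- s) coll p (Q j) =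
  \int[mu]_(f in F) ((p f)%:E * \sum_(j <- s) potential (Q j) f).
Proof.
move=> dp dQ; have [mp p0 _] := dp.
under [RHS]eq_integral => f /set_mem Ff.
  rewrite ge0_sume_distrr => [|j _]; last exact: potential_ge0.
  over.
rewrite ge0_integral_sum //.
- by apply: eq_bigr => j _; rewrite coll_potentialE.
- move=> j; apply: emeasurable_funM; last exact: measurable_potential.
  exact/measurable_EFinP.
- by move=> j f Ff; rewrite mule_ge0 ?lee_fin ?p0 ?potential_ge0.
Qed.

Section coordinate_update.
Variables (n : nat) (Q Q' : 'I_n.+1 -> T -> R) (k : 'I_n.+1).
Hypotheses (dQ : forall j, is_density mu F (Q j))
  (dQ' : forall j, is_density mu F (Q' j)).
Hypothesis QQ' : forall j, j != k -> Q' j = Q j.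

Let rest := \sum_(a < n.+1)
  \sum_(b < n.+1 | [&& (a < b)%N, a != k & b != k]) coll (Q a) (Q b).

Let rest_ge0 : 0 <= rest.
Proof. by do 2!apply: sume_ge0 => ? _; exact: coll_ge0. Qed.

Let JcE (P : 'I_n.+1 -> T -> R) : (forall j, is_density mu F (P j)) ->
  (forall j, j != k -> P j = Q j) ->
  Jc P = rest + \sum_(j < n.+1 | j != k) coll (P k) (Q j).
Proof.
move=> dP PQ; rewrite /Defs.Jc (sum_pairs_split k) => [|a b]; last exact: collC.
congr (_ + _); last by apply: eq_bigr => j /PQ ->.
apply: eq_bigr => a _; apply: eq_bigr => b /and3P[_ ak bk].
by rewrite !PQ.
Qed.

Lemma sum_coll_le_Jc : \sum_(j < n.+1 | j != k) coll (Q k) (Q j) <= Jc Q.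
Proof. by rewrite (JcE dQ) // leeDr. Qed.

Lemma Jc_update_le :
  \sum_(j < n.+1 | j != k) coll (Q' k) (Q j) <=
  \sum_(j < n.+1 | j != k) coll (Q k) (Q j) -> Jc Q' <= Jc Q.
Proof. by move=> le; rewrite (JcE dQ') // (JcE dQ) // leeD2l. Qed.

Lemma Jc_update_lt : Jc Q < +oo ->
  \sum_(j < n.+1 | j != k) coll (Q' k) (Q j) <
  \sum_(j < n.+1 | j != k) coll (Q k) (Q j) -> Jc Q' < Jc Q.
Proof.
rewrite (JcE dQ') // (JcE dQ) // => lty lt.
have sum_ge0 : 0 <= \sum_(j < n.+1 | j != k) coll (Q k) (Q j).
  by apply: sume_ge0 => j _; exact: coll_ge0.
rewrite lteD2lE // ge0_fin_numE //; apply: le_lt_trans lty; exact: leeDl.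
Qed.

End coordinate_update.

Section sweep.
Variables (n : nat) (pk pk1 : 'I_n.+1 -> T -> R).
Hypothesis dpk : forall i, is_density mu F (pk i).
Hypothesis gammabar_fin :
  forall i f, F f -> gammabar mu F psi pk pk1 i f \is a fin_num.
Hypothesis update : update_rule mu F psi pk pk1.

Let sweep (s : nat) (j : 'I_n.+1) : T -> R :=
  if (j < s)%N then pk1 j else pk j.

Let gam (i : 'I_n.+1) f := fine (gammabar mu F psi pk pk1 i f).

Lemma gammabar_sweepE i f : gammabar mu F psi pk pk1 i f =
  \sum_(j < n.+1 | j != i) potential (sweep i j) f.
Proof.
rewrite /gammabar [RHS](bigID (fun j : 'I_n.+1 => (j < i)%N)) /=.
congr (_ + _); apply: eq_big => j; rewrite /sweep.
- by rewrite -val_eqE /=; case: ltngtP.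
- by move=> ->.
- by rewrite -val_eqE /=; case: ltngtP.
- by move=> /ltnW; rewrite leqNgt => /negbTE ->.
Qed.

Section gibbs_step.
Variable i : 'I_n.+1.
Hypothesis dsweep : forall j, is_density mu F (sweep i j).

Let measurable_gam : measurable_fun F (gam i).
Proof.
apply: measurableT_comp => //.
apply: (eq_measurable_fun (fun f => \sum_(j <- [seq j <- index_enum 'I_n.+1 |
    j != i]) potential (sweep i j) f)).
  by move=> f _; rewrite gammabar_sweepE big_filter.
by apply: emeasurable_sum => j; exact: measurable_potential.
Qed.

Let gam_ge0 f : F f -> (0 <= gam i f)%R.
Proof.
move=> Ff; rewrite fine_ge0 // gammabar_sweepE sume_ge0 // => j _.
exact: potential_ge0.
Qed.

Lemma is_density_gibbs_step : is_density mu F (pk1 i).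
Proof.
apply: (is_density_gibbs mF (dpk i) measurable_gam gam_ge0).
exact: update.
Qed.

Let dpk1 : is_density mu F (pk1 i) := is_density_gibbs_step.

Let sum_coll_sweep p : is_density mu F p ->
  \sum_(j < n.+1 | j != i) coll p (sweep i j) =
  \int[mu]_(f in F) (p f * gam i f)%:E.
Proof.
move=> dp; rewrite -big_filter (sum_coll_potential _ dp dsweep).
apply: eq_integral => f /set_mem Ff.
by rewrite big_filter -gammabar_sweepE EFinM fineK ?gammabar_fin.
Qed.

Let sweepS_neq j : j != i -> sweep i.+1 j = sweep i j.
Proof. by rewrite /sweep ltnS leq_eqVlt val_eqE => /negbTE ->. Qed.

Let sweepS_i : sweep i.+1 i = pk1 i. Proof. by rewrite /sweep ltnSn. Qed.

Let sweep_i : sweep i i = pk i. Proof. by rewrite /sweep ltnn. Qed.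

Let dsweepS j : is_density mu F (sweep i.+1 j).
Proof.
have [->|/sweepS_neq ->] := eqVneq j i; last exact: dsweep.
by rewrite sweepS_i.
Qed.

Lemma Jc_sweepS_le : Jc (sweep i.+1) <= Jc (sweep i).
Proof.
apply: (Jc_update_le dsweep dsweepS sweepS_neq).
rewrite sweepS_i sweep_i !sum_coll_sweep //.
by apply: (gibbs_le mF (dpk i) measurable_gam gam_ge0); exact: update.
Qed.

Lemma Jc_sweepS_lt : Jc (sweep i) < +oo ->
  ~ {ae mu, forall f, F f -> pk1 i f = pk i f} ->
  Jc (sweep i.+1) < Jc (sweep i).
Proof.
move=> lty not_ae; apply: (Jc_update_lt dsweep dsweepS sweepS_neq) => //.
have := le_lt_trans (sum_coll_le_Jc i dsweep) lty.
rewrite sweepS_i sweep_i !sum_coll_sweep // => pgam_lty.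
by apply: (gibbs_lt mF (dpk i) measurable_gam gam_ge0) => //; exact: update.
Qed.

End gibbs_step.

Lemma is_density_pk1 i : is_density mu F (pk1 i).
Proof.
have [m] := ubnP i; elim: m i => // m IH i /ltnSE im.
apply: is_density_gibbs_step => j; rewrite /sweep; case: ifP => [ji|_].
  by apply: IH; exact: leq_trans ji im.
exact: dpk.
Qed.

Let dsweep s j : is_density mu F (sweep s j).
Proof.
by rewrite /sweep; case: ifP => _; [exact: is_density_pk1 | exact: dpk].
Qed.

Lemma Jc_sweep_le s t : (s <= t <= n.+1)%N -> Jc (sweep t) <= Jc (sweep s).
Proof.
move=> /andP[]; elim: t => [|t IH]; first by rewrite leqn0 => /eqP ->.
rewrite leq_eqVlt => /orP[/eqP -> //|st] tn.
exact: le_trans (Jc_sweepS_le (i := Ordinal tn) (dsweep _)) (IH st (ltnW tn)).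
Qed.

Lemma Jc_pk1_lt : Jc pk < +oo ->
  (exists i, ~ {ae mu, forall f, F f -> pk1 i f = pk i f}) -> Jc pk1 < Jc pk.
Proof.
have sweep0 : sweep 0 = pk by apply/funext => j; rewrite /sweep ltn0.
have sweepn : sweep n.+1 = pk1 by apply/funext => j; rewrite /sweep ltn_ord.
move=> lty [i not_ae]; rewrite -sweep0 -sweepn in lty *.
have le_i : Jc (sweep i) <= Jc (sweep 0).
  by apply: Jc_sweep_le; rewrite leq0n ltnW.
have le_n : Jc (sweep n.+1) <= Jc (sweep i.+1).
  by apply: Jc_sweep_le; rewrite ltn_ord leqnn.
have lt_i := Jc_sweepS_lt (dsweep i) (le_lt_trans le_i lty) not_ae.
exact: le_lt_trans le_n (lt_le_trans lt_i le_i).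
Qed.

End sweep.

End collision.

Theorem theorem2 (dT : measure_display) (T : measurableType dT) (R : realType)
  (mu : {sigma_finite_measure set T -> \bar R}) (F : set T) (psi : T -> T -> R)
  (n : nat) (pk pk1 : 'I_n.+1 -> T -> R) :
  measurable F ->
  measurable_fun (F `*` F) (fun x : T * T => psi x.1 x.2) ->
  (forall f g, F f -> F g -> 0 <= psi f g) ->
  (forall f g, F f -> F g -> psi f g = psi g f) ->
  (forall i, is_density mu F (pk i)) ->
  (forall i f, F f -> gammabar mu F psi pk pk1 i f \is a fin_num) ->
  update_rule mu F psi pk pk1 ->
  (exists i : 'I_n.+1, ~ {ae mu, forall f, F f -> pk1 i f = pk i f}) ->
  exists xi : R, 0 < xi /\
    (Jc mu F psi pk1 <= Jc mu F psi pk - xi%:E)%E.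
Proof.
move=> mF mpsi psi0 psiC dpk gammabar_fin update not_ae.
apply: ereal_gap => lty.
by apply: (Jc_pk1_lt mF mpsi psi0 psiC dpk gammabar_fin update).
Qed.
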